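(* For every integer $p\ge 2$, the path $P_p$ on $p$ vertices satisfies $\gamma_{[3R]}(P_p)=M_p$, where $M_p=4\lfloor p/3\rfloor$ if $p\equiv 0\pmod 3$, $M_p=4\lfloor p/3\rfloor+3$ if $p\equiv 1\pmod 3$, and $M_p=4\lfloor p/3\rfloor+4$ if $p\equiv 2\pmod 3$.
   Context: For a graph $\Gamma=(V,E)$ and $h:V\to\{0,1,2,3,4\}$, let $AN(v)=\{w\in N(v):h(w)\ge 1\}$, $AN[v]=AN(v)\cup\{v\}$ and $h(S)=\sum_{u\in S}h(u)$. $h$ is a triple Roman dominating function (3RDF) if every $v$ with $h(v)<3$ satisfies $h(AN[v])\ge|AN(v)|+3$. The triple Roman domination number $\gamma_{[3R]}(\Gamma)$ is the minimum weight $h(V)$ of a 3RDF of $\Gamma$. *)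

From mathcomp Require Import all_boot.
Set Implicit Arguments. Unset Strict Implicit. Unset Printing Implicit Defensive.

Section TRD.
Variables (T : finType) (e : rel T).

Definition AN (h : {ffun T -> 'I_5}) (v : T) : {set T} :=
  [set w | e v w & 0 < h w].
Definition ANc (h : {ffun T -> 'I_5}) (v : T) : {set T} := v |: AN h v.

Definition hsum (h : {ffun T -> 'I_5}) (S : {set T}) : nat :=
  \sum_(u in S) (h u : nat).

Definition is_3RDF (h : {ffun T -> 'I_5}) : bool :=
  [forall v, (h v < 3) ==> (#|AN h v| + 3 <= hsum h (ANc h v))].

Definition weight (h : {ffun T -> 'I_5}) : nat := \sum_(u : T) (h u : nat).

(* minimum weight of a 3RDF (the constant function 3 is always a 3RDF,
   so the minimum is taken over a nonempty set). *)
Definition gamma3R : nat :=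
  \big[minn/weight [ffun => inord 3]]_(h | is_3RDF h) weight h.
End TRD.

Definition path_rel (p : nat) : rel 'I_p :=
  fun i j => (i.+1 == j :> nat) || (j.+1 == i :> nat).
Arguments path_rel p : clear implicits.

Definition Mp (p : nat) : nat :=
  if p %% 3 == 0 then 4 * (p %/ 3)
  else if p %% 3 == 1 then 4 * (p %/ 3) + 3
  else 4 * (p %/ 3) + 4.

From mathcomp Require Import all_boot zify.

Set Implicit Arguments.
Unset Strict Implicit.
Unset Printing Implicit Defensive.

(* A function on the path P_p is encoded by its sequence of values, padded
   with a 0 at each end (a neighbour of value 0 is not active, so the padding
   changes nothing); being a 3RDF then says that every window (a, b, c) of
   three consecutive values satisfies [window3 a b c].  The pattern
   0 4 0 0 4 0 ..., completed by 3 or by 0 4, attains M_p.  For the lower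
   bound, read an admissible sequence from right to left: a suffix s preceded
   by the value a satisfies 3 Σ s - 4 |s| >= Φ(a, head s, |s| mod 3) - 4 for
   the potential Φ tabulated in [potential_table].  The induction step is one
   inequality per window, checked by computation, and at the left end
   (a = 0) the potential yields 3 Σ s >= 3 M_p. *)

Lemma geq_bigmin_seq (I : eqType) (r : seq I) (P : pred I) (F : I -> nat) x0 i :
  i \in r -> P i -> \big[minn/x0]_(j <- r | P j) F j <= F i.
Proof.
elim: r => [|j r IH] //; rewrite inE big_cons => /orP[/eqP <- -> | ri Pi].
  exact: geq_minl.
by case: ifP => _; rewrite ?geq_min IH ?orbT.
Qed.

Lemma leq_bigmin (I : finType) (P : pred I) (F : I -> nat) x0 m :
  m <= x0 -> (forall i, P i -> m <= F i) -> m <= \big[minn/x0]_(i | P i) F i.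
Proof.
by move=> m_x0 m_F; elim/big_ind: _ => // x y; rewrite leq_min => -> ->.
Qed.

Section Gamma3R.
Variables (T : finType) (e : rel T).

Lemma is_3RDF_const3 : is_3RDF e [ffun => inord 3].
Proof. by apply/forallP => v; rewrite ffunE inordK. Qed.

Lemma gamma3R_le h : is_3RDF e h -> gamma3R e <= weight h.
Proof. exact: geq_bigmin_seq (mem_index_enum h). Qed.

Lemma gamma3R_ge m :
  (forall h, is_3RDF e h -> m <= weight h) -> m <= gamma3R e.
Proof. by move=> lb; apply: leq_bigmin => //; apply/lb/is_3RDF_const3. Qed.

End Gamma3R.

Definition window3 (a b c : nat) : bool :=
  (b < 3) ==> ((0 < a) + (0 < c) + 3 <= b + (a + c)).

Fixpoint windows3 (s : seq 'I_5) : bool :=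
  match s with
  | a :: ((b :: c :: _) as t) => window3 a b c && windows3 t
  | _ => true
  end.

Definition pad0 (s : seq 'I_5) : seq 'I_5 := ord0 :: rcons s ord0.

Definition is_3RDF_seq (s : seq 'I_5) : bool := windows3 (pad0 s).

Lemma nth_pad0_end s k : k = 0 \/ k = (size s).+1 -> nth ord0 (pad0 s) k = ord0.
Proof. by case=> ->; rewrite //= nth_rcons ltnn eqxx. Qed.

Lemma nth_pad0 s k : k < size s -> nth ord0 (pad0 s) k.+1 = nth ord0 s k.
Proof. by move=> ks; rewrite /= nth_rcons ks. Qed.

Lemma windows3_cons2 a b t : t != [::] ->
  windows3 [:: a, b & t] = window3 a b (head ord0 t) && windows3 (b :: t).
Proof. by case: t. Qed.

Lemma windows3P s :
  reflect (forall j, j.+2 < size s ->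
             window3 (nth ord0 s j) (nth ord0 s j.+1) (nth ord0 s j.+2))
          (windows3 s).
Proof.
elim: s => [|a [|b [|c t]] IH]; try by constructor=> -[|j].
rewrite windows3_cons2 //; apply: (iffP andP) => [[w /IH ws] | ws].
  by case=> [_ | j /ws].
by split; [apply: (ws 0) | apply/IH => j /(ws j.+1)].
Qed.

Section PathGraph.
Variable p : nat.
Implicit Types (h : {ffun 'I_p -> 'I_5}) (i : 'I_p).

Lemma sum_path_nbr (G : nat -> nat) i : G 0 = 0 -> G p.+1 = 0 ->
  \sum_(w | path_rel p i w) G w.+1 = G i + G i.+2.
Proof.
move=> G0 Gp.
have sum_at k : k <= p.+1 -> \sum_(w < p | w.+1 == k) G w.+1 = G k.
  case: k => [_ | k]; first by rewrite big_pred0.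
  rewrite ltnS leq_eqVlt => /orP[/eqP -> | kp].
    by rewrite big_pred0 // => w; rewrite eqSS ltn_eqF.
  by rewrite (big_pred1 (Ordinal kp)) // => w; rewrite eqSS.
rewrite (bigID (fun w : 'I_p => w.+1 == i)) /=.
rewrite -(sum_at i (leqW (ltnW (ltn_ord i)))) -(sum_at i.+2 (ltn_ord i)).
congr (_ + _); apply: eq_bigl => w; rewrite /path_rel.
  by case: (w.+1 == i); rewrite ?orbT ?andbF.
case: (w.+1 =P i) => [wi | _]; last by rewrite orbF andbT eqSS eq_sym.
by rewrite andbF; apply/esym/eqP; lia.
Qed.

Lemma size_codom_ord h : size (codom h) = p.
Proof. by rewrite size_codom card_ord. Qed.

Lemma nth_codom_ord h i : nth ord0 (codom h) i = h i.
Proof. by rewrite codomE (nth_map i) ?size_enum_ord // nth_ord_enum. Qed.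

Lemma nth_pad0_codom h i : nth ord0 (pad0 (codom h)) i.+1 = h i.
Proof. by rewrite nth_pad0 ?size_codom_ord ?nth_codom_ord. Qed.

Lemma path_window h i (t := pad0 (codom h)) :
  (h i < 3) ==> (#|AN (path_rel p) h i| + 3 <= hsum h (ANc (path_rel p) h i))
  = window3 (nth ord0 t i) (nth ord0 t i.+1) (nth ord0 t i.+2).
Proof.
have sum_nbr (F : nat -> nat) : F 0 = 0 ->
    \sum_(w | path_rel p i w) F (h w) = F (nth ord0 t i) + F (nth ord0 t i.+2).
  move=> F0; rewrite -(sum_path_nbr (G := fun k => F (nth ord0 t k))).
  - by apply: eq_bigr => w _; rewrite nth_pad0_codom.
  - by rewrite nth_pad0_end; auto.
  - by rewrite nth_pad0_end ?size_codom_ord; auto.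
have card_AN : #|AN (path_rel p) h i| = \sum_(w | path_rel p i w) (0 < h w).
  rewrite -sum1_card big_mkcond [RHS]big_mkcond; apply: eq_bigr => w _.
  by rewrite inE; case: (path_rel p i w); case: (0 < h w).
have hsum_ANc :
    hsum h (ANc (path_rel p) h i) = h i + \sum_(w | path_rel p i w) h w.
  rewrite /hsum big_setU1 /=; last by rewrite inE /path_rel !eqn_leq !ltnn.
  congr (_ + _); rewrite big_mkcond [RHS]big_mkcond; apply: eq_bigr => w _.
  by rewrite inE; case: (path_rel p i w); case: posnP.
rewrite card_AN hsum_ANc (sum_nbr (fun x => 0 < x)) //.
by rewrite (sum_nbr (fun x => x)) // nth_pad0_codom.
Qed.

Lemma is_3RDF_path h : is_3RDF (path_rel p) h = is_3RDF_seq (codom h).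
Proof.
have size_t : size (pad0 (codom h)) = p.+2.
  by rewrite /= size_rcons size_codom_ord.
apply/forallP/windows3P => [ok j | ok i]; rewrite ?path_window.
  by rewrite size_t !ltnS => jp; have := ok (Ordinal jp); rewrite path_window.
by apply: ok; rewrite size_t !ltnS.
Qed.

Lemma weight_codom h : weight h = \sum_(x <- codom h) x.
Proof. by rewrite codomE big_map big_enum. Qed.

Lemma codom_ffun_nth (s : seq 'I_5) :
  size s = p -> codom [ffun i : 'I_p => nth ord0 s i] = s.
Proof.
move=> size_s; apply: (@eq_from_nth _ ord0) => [|j]; rewrite size_codom_ord //.
move=> jp; rewrite codomE (nth_map (Ordinal jp)) ?size_enum_ord // ffunE.
by rewrite nth_enum_ord.
Qed.

Lemma path_gamma3R_le (s : seq 'I_5) :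
  size s = p -> is_3RDF_seq s -> gamma3R (path_rel p) <= \sum_(x <- s) x.
Proof.
move=> size_s ok; rewrite -(codom_ffun_nth size_s) -weight_codom.
by apply: gamma3R_le; rewrite is_3RDF_path codom_ffun_nth.
Qed.

Lemma path_gamma3R_ge m :
  (forall s : seq 'I_5, size s = p -> is_3RDF_seq s -> m <= \sum_(x <- s) x) ->
  m <= gamma3R (path_rel p).
Proof.
move=> lb; apply: gamma3R_ge => h; rewrite is_3RDF_path weight_codom.
by apply: lb; rewrite size_codom_ord.
Qed.

End PathGraph.

(* [potential a b r] is 4 plus the least value of 3 Σ s - 4 |s| over the
   sequences s with head b (b = 0 if s is empty) and |s| = r (mod 3) such that
   [windows3 (a :: rcons s 0)]; it was computed by dynamic programming, and
   only the inequalities checked below are used. *)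
Definition potential_table : seq (seq (seq nat)) :=
  [:: [:: [:: 4; 7; 10; 10; 13]; [:: 4; 7; 10; 10; 13]; [:: 4; 7; 7; 10; 13];
          [:: 4; 7; 7; 10; 13]; [:: 4; 7; 7; 10; 13]];
      [:: [:: 9; 9; 9; 9; 12]; [:: 9; 9; 9; 9; 12]; [:: 6; 9; 6; 9; 12];
          [:: 6; 3; 6; 9; 12]; [:: 0; 3; 6; 9; 12]];
      [:: [:: 8; 8; 8; 8; 8]; [:: 8; 8; 8; 8; 8]; [:: 5; 8; 8; 8; 8];
          [:: 5; 8; 8; 8; 8]; [:: 5; 8; 8; 8; 8]]].

Definition potential (a b r : nat) : nat :=
  nth 0 (nth [::] (nth [::] potential_table r) a) b.

Lemma potential_step_check :
  all (fun a => all (fun b => all (fun c => all (fun r =>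
    window3 a b c ==> (potential a b (r.+1 %% 3) + 4 <= 3 * b + potential b c r))
  (iota 0 3)) (iota 0 5)) (iota 0 5)) (iota 0 5).
Proof. by []. Qed.

Lemma potential_step a b c r : a < 5 -> b < 5 -> c < 5 -> r < 3 ->
  window3 a b c -> potential a b (r.+1 %% 3) + 4 <= 3 * b + potential b c r.
Proof.
move=> a5 b5 c5 r3; move: potential_step_check.
move=> /allP/(_ a); rewrite mem_iota a5 => /(_ isT).
move=> /allP/(_ b); rewrite mem_iota b5 => /(_ isT).
move=> /allP/(_ c); rewrite mem_iota c5 => /(_ isT).
by move=> /allP/(_ r); rewrite mem_iota r3 => /(_ isT)/implyP.
Qed.

Lemma potential_nil a : a < 5 -> potential a 0 0 = 4.
Proof. by case: a => [|[|[|[|[|]]]]]. Qed.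

Lemma potential_left_end b n :
  b < 5 -> 3 * Mp n + 4 <= 4 * n + potential 0 b (n %% 3).
Proof.
have n_eq := divn_eq n 3; have := ltn_pmod n (isT : 0 < 3).
rewrite /Mp; case: (n %% 3) n_eq => [|[|[|//]]] n_eq _ /=;
  case: b => [|[|[|[|[|//]]]]] _; rewrite /potential /=; lia.
Qed.

Lemma windows3_potential (a : 'I_5) (s : seq 'I_5) :
  windows3 (a :: rcons s ord0) ->
  4 * size s + potential a (head ord0 s) (size s %% 3) <= 3 * \sum_(x <- s) x + 4.
Proof.
elim: s a => [|b s IH] a; first by rewrite big_nil potential_nil.
have [rcons_nnil head_rcons] :
    rcons s ord0 != [::] /\ head ord0 (rcons s ord0) = head ord0 s.
  by case: s {IH}.
rewrite rcons_cons windows3_cons2 // head_rcons => /andP[ab ok]; have := IH b ok.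
have := potential_step (ltn_ord a) (ltn_ord b) (ltn_ord (head ord0 s))
  (ltn_pmod (size s) (isT : 0 < 3)) ab.
have -> : (size s).+1 %% 3 = (size s %% 3).+1 %% 3 by lia.
by rewrite big_cons /=; lia.
Qed.

Lemma Mp_le_sum (s : seq 'I_5) : is_3RDF_seq s -> Mp (size s) <= \sum_(x <- s) x.
Proof.
move=> /windows3_potential /=.
by have := potential_left_end (size s) (ltn_ord (head ord0 s)); lia.
Qed.

Definition block : seq 'I_5 := [:: ord0; ord_max; ord0].

Definition witness (n : nat) : seq 'I_5 :=
  flatten (nseq (n %/ 3) block) ++
  (if n %% 3 == 0 then [::]
   else if n %% 3 == 1 then [:: inord 3] else [:: ord0; ord_max]).

Lemma windows3_max t : windows3 (ord_max :: t) = windows3 t.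
Proof.
case: t => [|b [|c t]] //; rewrite windows3_cons2 //= andb_idl // => _.
by rewrite /window3; lia.
Qed.

Lemma windows3_blocks k t :
  windows3 (ord0 :: flatten (nseq k block) ++ t) = windows3 (ord0 :: t).
Proof.
elim: k => [|k IH] //; rewrite -IH.
have -> : ord0 :: flatten (nseq k.+1 block) ++ t =
          [:: ord0, ord0, ord_max & ord0 :: flatten (nseq k block) ++ t] by [].
by rewrite windows3_cons2 // windows3_cons2 // windows3_max.
Qed.

Lemma is_3RDF_witness n : is_3RDF_seq (witness n).
Proof.
rewrite /is_3RDF_seq /pad0 rcons_cat windows3_blocks.
by case: ifP => _; [|case: ifP => _]; rewrite /= /window3 ?inordK.
Qed.

Lemma size_witness n : size (witness n) = n.
Proof.
rewrite size_cat size_flatten /shape map_nseq sumn_nseq.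
have n_eq := divn_eq n 3; have := ltn_pmod n (isT : 0 < 3).
by case: ifP => /eqP; [|case: ifP => /eqP] => /=; lia.
Qed.

Lemma sum_witness n : \sum_(x <- witness n) x = Mp n.
Proof.
have sum_blocks k : \sum_(x <- flatten (nseq k block)) x = 4 * k.
  elim: k => [|k IH]; first by rewrite big_nil.
  by rewrite [flatten _]/= !big_cons IH /=; lia.
rewrite big_cat sum_blocks /Mp.
by case: ifP => _; [|case: ifP => _]; rewrite ?big_cons big_nil ?inordK /= ?addn0.
Qed.

Theorem proposition20 (p : nat) : 2 <= p -> gamma3R (path_rel p) = Mp p.
Proof.
move=> _; apply/anti_leq/andP; split.
  by rewrite -sum_witness path_gamma3R_le ?size_witness ?is_3RDF_witness.
by apply: path_gamma3R_ge => s <-; apply: Mp_le_sum.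
Qed.
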